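(* Let $\rho$ be a two-qubit state whose two reduced states are both maximally mixed, i.e. $\mathrm{Tr}[\rho(\sigma_i\otimes\mathbb{1})]=\mathrm{Tr}[\rho(\mathbb{1}\otimes\sigma_i)]=0$ for $i=1,2,3$, and let $T$ be its correlation matrix $T_{ij}=\mathrm{Tr}[\rho(\sigma_i\otimes\sigma_j)]$, brought by local unitary operations to the diagonal form $T=\mathrm{diag}(t_1,t_2,t_3)$. Then $$G(\rho)=\tfrac14\big[t_1^2+t_2^2+t_3^2-\max\{t_1^2,t_2^2,t_3^2\}\big],$$ and $G(\rho)=G^{\to}(\rho)=G^{\leftarrow}(\rho)$.
   Context: $\sigma_i$ are the Pauli matrices. The Hilbert–Schmidt distance is $D(M,N)=\sqrt{\mathrm{Tr}[(M-N)(M-N)^\dagger]}$. For unit vectors $\vec{k},\vec{\ell}\in\mathbb{R}^3$ let $\Pi^A_\pm=\frac12(\mathbb{1}\pm\vec{k}\cdot\vec{\sigma})$, $\Pi^B_\pm=\frac12(\mathbb{1}\pm\vec{\ell}\cdot\vec{\sigma})$. Define $\chi_{\vec{k},\vec{\ell}}=\sum_{i,j=\pm}(\Pi^A_i\otimes\Pi^B_j)\rho(\Pi^A_i\otimes\Pi^B_j)$, $\rho^{\to}_{\vec{k}}=\sum_{i=\pm}(\Pi^A_i\otimes\mathbb{1})\rho(\Pi^A_i\otimes\mathbb{1})$, $\rho^{\leftarrow}_{\vec{\ell}}=\sum_{j=\pm}(\mathbb{1}\otimes\Pi^B_j)\rho(\mathbb{1}\otimes\Pi^B_j)$. Then $G(\rho)=\min_{\vec{k},\vec{\ell}}D^2(\rho,\chi_{\vec{k},\vec{\ell}})$,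 $G^{\to}(\rho)=\min_{\vec{k}}D^2(\rho,\rho^{\to}_{\vec{k}})$, $G^{\leftarrow}(\rho)=\min_{\vec{\ell}}D^2(\rho,\rho^{\leftarrow}_{\vec{\ell}})$, minima over unit vectors. (All these quantities are invariant under local unitaries.) *)

From HB Require Import structures.
From mathcomp Require Import all_boot all_order all_algebra.
From mathcomp Require Import complex mxtens.
Set Implicit Arguments. Unset Strict Implicit. Unset Printing Implicit Defensive.
Import Order.TTheory GRing.Theory Num.Theory.
Local Open Scope ring_scope.

Section Qubits.
Variable R : rcfType.
Local Notation C := (R[i]).

Definition rC (x : R) : C := Complex x 0.

Definition hadj m n (M : 'M[C]_(m, n)) : 'M[C]_(n, m) := map_mx Num.conj (M^T).

(* Pauli matrices sigma_1, sigma_2, sigma_3 (indexed by 'I_3 = {0,1,2}) *)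
Definition pauli (a : 'I_3) : 'M[C]_2 :=
  \matrix_(i < 2, j < 2)
    match nat_of_ord a, nat_of_ord i, nat_of_ord j with
    | 0, 0, 1 => 1 | 0, 1, 0 => 1
    | 1, 0, 1 => - Complex 0 1 | 1, 1, 0 => Complex 0 1
    | 2, 0, 0 => 1 | 2, 1, 1 => -1
    | _, _, _ => 0
    end.

Definition id2 : 'M[C]_2 := 1%:M.

Definition unitvec (k : 'rV[R]_3) : Prop := \sum_(i < 3) k 0 i ^+ 2 = 1.

Definition kdots (k : 'rV[R]_3) : 'M[C]_2 := \sum_(i < 3) rC (k 0 i) *: pauli i.

Definition proj (k : 'rV[R]_3) (b : bool) : 'M[C]_2 :=
  (2%:R)^-1 *: (id2 + ((-1) ^+ b) *: kdots k).

Definition chi (rho : 'M[C]_(2 * 2)) (k l : 'rV[R]_3) : 'M[C]_(2 * 2) :=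
  \sum_(a : bool) \sum_(b : bool)
    ((proj k a *t proj l b) *m rho *m (proj k a *t proj l b)).

Definition rho_to (rho : 'M[C]_(2 * 2)) (k : 'rV[R]_3) : 'M[C]_(2 * 2) :=
  \sum_(a : bool) ((proj k a *t id2) *m rho *m (proj k a *t id2)).

Definition rho_from (rho : 'M[C]_(2 * 2)) (l : 'rV[R]_3) : 'M[C]_(2 * 2) :=
  \sum_(b : bool) ((id2 *t proj l b) *m rho *m (id2 *t proj l b)).

Definition HS2 n (M N : 'M[C]_n) : C := \tr ((M - N) *m hadj (M - N)).

Definition density n (rho : 'M[C]_n) : Prop :=
  [/\ hadj rho = rho,
      (forall v : 'cV[C]_n, 0 <= (hadj v *m rho *m v) 0 0)
    & \tr rho = 1].

Definition unitary2 (U : 'M[C]_2) : Prop := U *m hadj U = 1%:M.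

Definition is_min_on (T : Type) (P : T -> Prop) (f : T -> C) (v : C) : Prop :=
  (exists2 x, P x & f x = v) /\ (forall x, P x -> v <= f x).

Definition G_is (rho : 'M[C]_(2 * 2)) (v : C) : Prop :=
  is_min_on (fun kl : 'rV[R]_3 * 'rV[R]_3 => unitvec kl.1 /\ unitvec kl.2)
            (fun kl => HS2 rho (chi rho kl.1 kl.2)) v.
Definition Gto_is (rho : 'M[C]_(2 * 2)) (v : C) : Prop :=
  is_min_on unitvec (fun k => HS2 rho (rho_to rho k)) v.
Definition Gfrom_is (rho : 'M[C]_(2 * 2)) (v : C) : Prop :=
  is_min_on unitvec (fun l => HS2 rho (rho_from rho l)) v.

Definition corr (rho : 'M[C]_(2 * 2)) (i j : 'I_3) : C :=
  \tr (rho *m (pauli i *t pauli j)).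

End Qubits.

Arguments pauli {R}.
Arguments id2 {R}.

From HB Require Import structures.
From mathcomp Require Import all_boot all_order all_algebra.
From mathcomp Require Import complex mxtens ring lra.
Import Order.TTheory GRing.Theory Num.Theory.
Local Open Scope ring_scope.
Set Implicit Arguments. Unset Strict Implicit. Unset Printing Implicit Defensive.

(* Expand two-qubit operators in the basis of tensor products of 1, sigma_1,
   sigma_2, sigma_3: the squared Hilbert-Schmidt norm becomes a quarter of the
   sum of the squared coefficients, and a state with maximally mixed marginals
   only has the coefficients 1 and T_ij.  A projective measurement along the
   unit vector k acts as the pinching Y |-> (Y + (k.sigma) Y (k.sigma)) / 2,
   which fixes 1 and sends sigma_i to k_i (k.sigma).  Hence
   4 D^2(rho, chi_kl) = |T|^2 - (k T l)^2 and 4 D^2(rho, rho->_k) = |T|^2 - |k T|^2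
   (symmetrically for rho<-_l).  Conjugation by a local unitary rotates the
   Bloch vector of k.sigma, so k T l = x diag(t) y for unit x, y and
   |T|^2 = t_1^2 + t_2^2 + t_3^2: all three minima are reached at the largest
   t_i^2, by the Cauchy-Schwarz inequality. *)

Section TensorProduct.
Variable K : comPzRingType.

Section Bilinear.
Variables m n p q : nat.
Implicit Types (A : 'M[K]_(m, n)) (B : 'M[K]_(p, q)).

Lemma tensmxZl c A B : (c *: A) *t B = c *: (A *t B).
Proof. by apply/matrixP => i j; rewrite !mxE mulrA. Qed.

Lemma tensmxZr c A B : A *t (c *: B) = c *: (A *t B).
Proof. by apply/matrixP => i j; rewrite !mxE mulrCA. Qed.

Lemma tensmx_suml (I : Type) (r : seq I) (P : pred I) (F : I -> 'M[K]_(m, n)) B :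
  (\sum_(i <- r | P i) F i) *t B = \sum_(i <- r | P i) (F i *t B).
Proof.
by apply/matrixP => i j; rewrite !mxE !summxE mulr_suml; apply: eq_bigr => x _; rewrite !mxE.
Qed.

Lemma tensmx_sumr (I : Type) (r : seq I) (P : pred I) A (F : I -> 'M[K]_(p, q)) :
  A *t (\sum_(i <- r | P i) F i) = \sum_(i <- r | P i) (A *t F i).
Proof.
by apply/matrixP => i j; rewrite !mxE !summxE mulr_sumr; apply: eq_bigr => x _; rewrite !mxE.
Qed.

End Bilinear.

Lemma tensmx11 m n : (1%:M : 'M[K]_m) *t (1%:M : 'M[K]_n) = 1%:M.
Proof.
apply/matrixP => i j.
case: (mxtens_indexP i) => i1 i2; case: (mxtens_indexP j) => j1 j2.
rewrite tensmxE !mxE (can_eq (@mxtens_indexK m n)) xpair_eqE.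
by case: (i1 == j1); case: (i2 == j2); rewrite ?mulr1 ?mulr0.
Qed.

Lemma delta_mx_tens m n (i1 j1 : 'I_m) (i2 j2 : 'I_n) :
  delta_mx (mxtens_index (i1, i2)) (mxtens_index (j1, j2))
  = delta_mx i1 j1 *t delta_mx i2 j2 :> 'M[K]_(m * n).
Proof.
apply/matrixP => i j.
case: (mxtens_indexP i) => k1 k2; case: (mxtens_indexP j) => l1 l2.
rewrite tensmxE !mxE !(can_eq (@mxtens_indexK m n)) !xpair_eqE.
by case: (k1 == i1); case: (k2 == i2); case: (l1 == j1); case: (l2 == j2);
  rewrite ?mulr1 ?mulr0.
Qed.

Lemma mxtrace_tens m n (A : 'M[K]_m) (B : 'M[K]_n) : \tr (A *t B) = \tr A * \tr B.
Proof. by rewrite /mxtrace mulr_sum; apply: eq_bigr => i _; rewrite !mxE. Qed.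

End TensorProduct.

Lemma complexP (R : rcfType) (x y : R[i]) :
  complex.Re x = complex.Re y -> complex.Im x = complex.Im y -> x = y.
Proof. by case: x => a b; case: y => c d /= -> ->. Qed.

(* Closes an identity between ring expressions in [Complex a b]'s, [a b : R],
   on which [Re] and [Im] compute. *)
Ltac complex_ring := apply: complexP; rewrite /rC /=; ring.

Section ComplexScalars.
Variable R : rcfType.
Local Notation C := R[i].
Implicit Types x y : R.

Lemma rCD x y : rC x + rC y = rC (x + y) :> C. Proof. complex_ring. Qed.
Lemma rCN x : - rC x = rC (- x) :> C. Proof. complex_ring. Qed.
Lemma rCM x y : rC x * rC y = rC (x * y) :> C. Proof. complex_ring. Qed.
Lemma rC0 : rC 0 = 0 :> C. Proof. by []. Qed.
Lemma rC1 : rC 1 = 1 :> C. Proof. by []. Qed.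
Lemma rC_inj : injective (@rC R). Proof. by move=> x y []. Qed.
Lemma rC_le x y : (rC x <= rC y) = (x <= y). Proof. by rewrite lecE /= eqxx. Qed.

Lemma rC_sum (I : Type) (r : seq I) (P : pred I) (F : I -> R) :
  rC (\sum_(i <- r | P i) F i) = \sum_(i <- r | P i) rC (F i).
Proof. exact: (big_morph _ (fun x y => esym (rCD x y)) rC0). Qed.

Lemma rC_natr n : n%:R = rC n%:R :> C.
Proof. by elim: n => // n IH; rewrite -!natr1 IH -rC1 rCD. Qed.

Lemma rCV x : (rC x)^-1 = rC x^-1 :> C.
Proof.
have [->|x_neq0] := eqVneq x 0; first by rewrite rC0 !invr0.
have rCx_neq0 : rC x != 0 :> C by apply: contra_neq x_neq0 => /(congr1 (@complex.Re R)).
by apply: (mulfI rCx_neq0); rewrite rCM mulfV // divff.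
Qed.

Lemma conjC_rC x : Num.conj (rC x) = rC x :> C. Proof. complex_ring. Qed.

Lemma conjC_id_rC (z : C) : Num.conj z = z -> z = rC (complex.Re z).
Proof.
by case: z => a b /= [] b0; congr Complex; lra.
Qed.

End ComplexScalars.

Lemma sum_ord3 (V : zmodType) (F : 'I_3 -> V) : \sum_i F i = F 0 + F 1 + F 2%R.
Proof.
by rewrite !big_ord_recr big_ord0 /= add0r; congr (F _ + F _ + F _); apply: val_inj.
Qed.

Section RealForms.
Variable R : realFieldType.
Implicit Types (T : 'M[R]_3) (k l x y : 'rV[R]_3).

Definition sqnorm n (x : 'rV[R]_n) : R := \sum_i x 0 i ^+ 2.

Definition frob2 T : R := \sum_i \sum_j T i j ^+ 2.

Definition bilin T k l : R := (k *m T *m l^T) 0 0.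

Lemma sqnorm_ge0 n (x : 'rV[R]_n) : 0 <= sqnorm x.
Proof. by apply: sumr_ge0 => i _; apply: sqr_ge0. Qed.

Lemma le_of_sqr_le_mul (w M : R) : 0 <= w -> 0 <= M -> w ^+ 2 <= M * w -> w <= M.
Proof. by move=> w0 M0 wM; nra. Qed.

Lemma cauchy_schwarz3 x y : ((x *m y^T) 0 0) ^+ 2 <= sqnorm x * sqnorm y.
Proof.
rewrite /sqnorm !mxE !sum_ord3 !mxE -subr_ge0.
set a := x 0 0; set b := x 0 1; set c := x 0 2%R.
set d := y 0 0; set e := y 0 1; set f := y 0 2%R.
have -> : (a ^+ 2 + b ^+ 2 + c ^+ 2) * (d ^+ 2 + e ^+ 2 + f ^+ 2) - (a * d + b * e + c * f) ^+ 2
    = (a * e - b * d) ^+ 2 + (a * f - c * d) ^+ 2 + (b * f - c * e) ^+ 2 by ring.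
by rewrite !addr_ge0 ?sqr_ge0.
Qed.

Lemma bilin_sqr_le T k l : bilin T k l ^+ 2 <= sqnorm (k *m T) * sqnorm l.
Proof. exact: cauchy_schwarz3. Qed.

Lemma bilin_trmx T k l : bilin T^T l k = bilin T k l.
Proof.
rewrite /bilin; have -> : (k *m T *m l^T) 0 0 = (k *m T *m l^T)^T 0 0 by rewrite [RHS]mxE.
by rewrite !trmx_mul trmxK mulmxA.
Qed.

Lemma bilin_mulmx T k : bilin T k (k *m T) = sqnorm (k *m T).
Proof.
by rewrite /bilin /sqnorm [LHS]mxE; apply: eq_bigr => i _; rewrite [X in _ * X]mxE expr2.
Qed.

Lemma frob2_residual_bilin T k l :
  frob2 (\matrix_(i, j) (T i j - k 0 i * l 0 j * bilin T k l))
  = frob2 T - 2%:R * bilin T k l ^+ 2 + bilin T k l ^+ 2 * sqnorm k * sqnorm l.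
Proof. by rewrite /frob2 /bilin /sqnorm !(sum_ord3, mxE); ring. Qed.

Lemma frob2_residual_row T k :
  frob2 (\matrix_(i, j) (T i j - k 0 i * (k *m T) 0 j))
  = frob2 T - (2%:R - sqnorm k) * sqnorm (k *m T).
Proof. by rewrite /frob2 /sqnorm !(sum_ord3, mxE); ring. Qed.

Lemma frob2_trmx T : frob2 T^T = frob2 T.
Proof.
by rewrite /frob2 exchange_big; apply: eq_bigr => i _; apply: eq_bigr => j _; rewrite mxE.
Qed.

Lemma frob2_residual_col T l :
  frob2 (\matrix_(i, j) (T i j - l 0 j * (l *m T^T) 0 i))
  = frob2 T - (2%:R - sqnorm l) * sqnorm (l *m T^T).
Proof.
rewrite -[frob2 T in RHS]frob2_trmx -frob2_residual_row -[LHS]frob2_trmx; congr frob2.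
by apply/matrixP => i j; rewrite !mxE.
Qed.

Lemma frob2_diag (t : 'rV[R]_3) : frob2 (diag_mx t) = sqnorm t.
Proof.
apply: eq_bigr => i _; rewrite (bigD1 i) //= big1 ?addr0 => [|j ji]; first by rewrite mxE eqxx.
by rewrite mxE eq_sym (negbTE ji) mulr0n expr0n.
Qed.

Lemma bilin_diag_sqr_le (t : 'rV[R]_3) M x y : (forall i, t 0 i ^+ 2 <= M) ->
  bilin (diag_mx t) x y ^+ 2 <= M * sqnorm x * sqnorm y.
Proof.
move=> tM; apply: le_trans (bilin_sqr_le _ _ _) _.
rewrite ler_wpM2r ?sqnorm_ge0 // /sqnorm mulr_sumr; apply: ler_sum => i _.
by rewrite mul_mx_diag mxE exprMn mulrC ler_wpM2r ?sqr_ge0.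
Qed.

End RealForms.

Section ConjugateTranspose.
Variable R : rcfType.
Local Notation C := R[i].

Lemma hadjK m n (A : 'M[C]_(m, n)) : hadj (hadj A) = A.
Proof. by apply/matrixP => i j; rewrite !mxE conjCK. Qed.

Lemma hadj_mul m n p (A : 'M[C]_(m, n)) (B : 'M[C]_(n, p)) :
  hadj (A *m B) = hadj B *m hadj A.
Proof. by rewrite /hadj trmx_mul map_mxM. Qed.

Lemma hadj_tens m n p q (A : 'M[C]_(m, n)) (B : 'M[C]_(p, q)) :
  hadj (A *t B) = hadj A *t hadj B.
Proof. by rewrite /hadj trmx_tens map_mxT. Qed.

Lemma mxtrace_hadj n (A : 'M[C]_n) : \tr (hadj A) = Num.conj (\tr A).
Proof. by rewrite /mxtrace rmorph_sum; apply: eq_bigr => i _; rewrite !mxE. Qed.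

Lemma unitary2_hadj (U : 'M[C]_2) : unitary2 U -> hadj U *m U = 1%:M.
Proof. exact: mulmx1C. Qed.

Lemma unitary2_hadjK (U : 'M[C]_2) : unitary2 U -> unitary2 (hadj U).
Proof. by move=> /unitary2_hadj; rewrite /unitary2 hadjK. Qed.

End ConjugateTranspose.

Section TwoByTwo.
Variable R : rcfType.
Local Notation C := R[i].
Implicit Types k : 'rV[R]_3.

Lemma sum_ord2 (V : zmodType) (F : 'I_2 -> V) : \sum_i F i = F 0 + F 1.
Proof. by rewrite !big_ord_recr big_ord0 /= add0r; congr (F _ + F _); apply: val_inj. Qed.

Lemma sum_bool (V : zmodType) (F : bool -> V) : \sum_b F b = F true + F false.
Proof. exact: big_bool. Qed.

Definition mx2 (a b c d : C) : 'M[C]_2 :=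
  \matrix_(i < 2, j < 2) if i == 0 then (if j == 0 then a else b)
                         else (if j == 0 then c else d).

Lemma mx2E (A : 'M[C]_2) : A = mx2 (A 0 0) (A 0 1) (A 1 0) (A 1 1).
Proof.
apply/matrixP => i j; rewrite !mxE.
by case: i => [[|[|i]] Hi] //; case: j => [[|[|j]] Hj] //=; congr (A _ _); apply: val_inj.
Qed.

Lemma mx2_mul a b c d a' b' c' d' : mx2 a b c d *m mx2 a' b' c' d' =
  mx2 (a * a' + b * c') (a * b' + b * d') (c * a' + d * c') (c * b' + d * d').
Proof.
apply/matrixP => i j; rewrite !mxE sum_ord2 !mxE.
by case: i => [[|[|i]] Hi] //; case: j => [[|[|j]] Hj].
Qed.

Lemma mx2_add a b c d a' b' c' d' :
  mx2 a b c d + mx2 a' b' c' d' = mx2 (a + a') (b + b') (c + c') (d + d').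
Proof. by apply/matrixP => i j; rewrite !mxE; case: ifP; case: ifP. Qed.

Lemma mx2_scale x a b c d : x *: mx2 a b c d = mx2 (x * a) (x * b) (x * c) (x * d).
Proof. by apply/matrixP => i j; rewrite !mxE; case: ifP; case: ifP. Qed.

Lemma mx2_hadj a b c d :
  hadj (mx2 a b c d) = mx2 (Num.conj a) (Num.conj c) (Num.conj b) (Num.conj d).
Proof.
apply/matrixP => i j; rewrite !mxE.
by case: i => [[|[|i]] Hi] //; case: j => [[|[|j]] Hj].
Qed.

Lemma mx2_trace a b c d : \tr (mx2 a b c d) = a + d.
Proof. by rewrite /mxtrace sum_ord2 !mxE. Qed.

Lemma id2E : id2 = mx2 1 0 0 1.
Proof. by apply/matrixP => i j; rewrite !mxE; case: i => [[|[|i]] Hi]; case: j => [[|[|j]] Hj]. Qed.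

Lemma pauliE : (pauli 0 = mx2 0 1 1 0) * (pauli 1 = mx2 0 (- 'i) 'i 0)
  * (pauli 2%R = mx2 1 0 0 (-1)).
Proof.
by do 2?split; apply/matrixP => i j; rewrite !mxE;
  case: i => [[|[|i]] Hi]; case: j => [[|[|j]] Hj].
Qed.

Lemma kdotsE k : kdots k =
  mx2 (rC (k 0 2%R)) (Complex (k 0 0) (- k 0 1)) (Complex (k 0 0) (k 0 1)) (rC (- k 0 2%R)).
Proof.
rewrite /kdots sum_ord3 !pauliE !mx2_scale !mx2_add; congr mx2; complex_ring.
Qed.

End TwoByTwo.

Ltac mx2_ring := rewrite ?(kdotsE, id2E, pauliE, mx2_mul, mx2_add,
  mx2_scale, mx2_hadj, mx2_trace); congr mx2; complex_ring.

Section PauliAlgebra.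
Variable R : rcfType.
Local Notation C := R[i].
Implicit Types k : 'rV[R]_3.

Lemma ord3P (a : 'I_3) : [\/ a = 0, a = 1 | a = 2%R].
Proof.
by case: a => [[|[|[|a]]] Ha] //; [constructor 1|constructor 2|constructor 3]; apply: val_inj.
Qed.

Lemma pauli_herm a : hadj (pauli a) = pauli a :> 'M[C]_2.
Proof. by case: (ord3P a) => ->; mx2_ring. Qed.

Lemma kdots_herm k : hadj (kdots k) = kdots k.
Proof. mx2_ring. Qed.

Lemma kdots_trace k : \tr (kdots k) = 0.
Proof. rewrite kdotsE mx2_trace; complex_ring. Qed.

Lemma kdots_sqr k : kdots k *m kdots k = rC (sqnorm k) *: id2.
Proof. rewrite /sqnorm sum_ord3; mx2_ring. Qed.

Lemma pauli_kdots_anticomm k a :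
  pauli a *m kdots k + kdots k *m pauli a = rC (2%:R * k 0 a) *: id2.
Proof. by case: (ord3P a) => ->; mx2_ring. Qed.

Lemma herm_traceless_kdots (H : 'M[C]_2) :
  hadj H = H -> \tr H = 0 -> exists k, H = kdots k.
Proof.
rewrite [H]mx2E mx2_hadj mx2_trace => /matrixP H_herm H_tr.
have := H_herm 0 0; have := H_herm 0 1; rewrite !mxE /=.
case: (H 0 0) H_tr => a b; case: (H 0 1) => c d; case: (H 1 0) => c' d'.
case: (H 1 1) => a' b' /= [a'E b'E] [cE dE] [bE].
exists (\row_i [:: c; - d; a]`_i); rewrite kdotsE !mxE /= -cE -dE.
by congr mx2; apply: complexP => /=; lra.
Qed.

End PauliAlgebra.

Section Pinching.
Variable R : rcfType.
Local Notation C := R[i].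
Implicit Types k : 'rV[R]_3.

Definition pinch k (Y : 'M[C]_2) : 'M[C]_2 := \sum_(b : bool) proj k b *m Y *m proj k b.

Lemma pinchE k Y : pinch k Y = 2%:R^-1 *: (Y + kdots k *m Y *m kdots k).
Proof.
rewrite /pinch sum_bool /proj [kdots k]mx2E [Y]mx2E.
rewrite !(id2E, mx2_scale, mx2_add, mx2_mul) expr1 expr0.
by congr mx2; field.
Qed.

Lemma pinch_id k : sqnorm k = 1 -> pinch k id2 = id2.
Proof.
move=> k1; rewrite pinchE /id2 mulmx1 kdots_sqr k1 rC1 scale1r -[1%:M]/id2.
by rewrite id2E mx2_add mx2_scale; congr mx2; field.
Qed.

Lemma pinch_pauli k a : sqnorm k = 1 -> pinch k (pauli a) = rC (k 0 a) *: kdots k.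
Proof.
move=> k1; have := pauli_kdots_anticomm k a; rewrite addrC => /(canRL (addrK _)) anticomm.
rewrite pinchE anticomm mulmxBl -scalemxAl /id2 mul1mx -mulmxA kdots_sqr k1 rC1 scale1r mulmx1.
rewrite addrC subrK scalerA rC_natr rCV rCM.
by congr (rC _ *: _); field.
Qed.

End Pinching.

Section PauliBasis.
Variable R : rcfType.
Local Notation C := R[i].
Local Notation M4 := 'M[C]_(2 * 2).
Implicit Types (X Y : M4) (A B : 'M[C]_2).

Definition expv X A B : C := \tr (X *m (A *t B)).

Lemma expvB X Y A B : expv (X - Y) A B = expv X A B - expv Y A B.
Proof. by rewrite /expv mulmxBl raddfB. Qed.

Lemma expvZl X c A B : expv X (c *: A) B = c * expv X A B.
Proof. by rewrite /expv tensmxZl -scalemxAr mxtraceZ. Qed.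

Lemma expvZr X c A B : expv X A (c *: B) = c * expv X A B.
Proof. by rewrite /expv tensmxZr -scalemxAr mxtraceZ. Qed.

Lemma expv_suml X (I : Type) (r : seq I) (P : pred I) (F : I -> 'M[C]_2) B :
  expv X (\sum_(i <- r | P i) F i) B = \sum_(i <- r | P i) expv X (F i) B.
Proof. by rewrite /expv tensmx_suml mulmx_sumr raddf_sum. Qed.

Lemma expv_sumr X (I : Type) (r : seq I) (P : pred I) A (F : I -> 'M[C]_2) :
  expv X A (\sum_(i <- r | P i) F i) = \sum_(i <- r | P i) expv X A (F i).
Proof. by rewrite /expv tensmx_sumr mulmx_sumr raddf_sum. Qed.

Lemma conj_expv X A B :
  hadj X = X -> hadj A = A -> hadj B = B -> Num.conj (expv X A B) = expv X A B.
Proof.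
by move=> hX hA hB; rewrite /expv -mxtrace_hadj hadj_mul hadj_tens hA hB hX mxtrace_mulC.
Qed.

Definition pauli4 (a : 'I_4) : 'M[C]_2 := if unlift ord0 a is Some i then pauli i else id2.

Lemma pauli4_0 : pauli4 ord0 = id2. Proof. by rewrite /pauli4 unlift_none. Qed.
Lemma pauli4_lift i : pauli4 (lift ord0 i) = pauli i. Proof. by rewrite /pauli4 liftK. Qed.

Lemma pauli4_herm a : hadj (pauli4 a) = pauli4 a.
Proof.
rewrite /pauli4; case: unlift => [i|]; first exact: pauli_herm.
by rewrite id2E mx2_hadj conjC1 conjC0.
Qed.

Lemma pauli4_expansion A : 2%:R *: A = \sum_a \tr (A *m pauli4 a) *: pauli4 a.
Proof.
rewrite big_ord_recl pauli4_0 sum_ord3 !pauli4_lift [A]mx2E.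
by move: (A 0 0) (A 0 1) (A 1 0) (A 1 1) => [? ?] [? ?] [? ?] [? ?]; mx2_ring.
Qed.

Definition pcoef X a b := expv X (pauli4 a) (pauli4 b).

Definition pauli_sum X : M4 := \sum_a \sum_b pcoef X a b *: (pauli4 a *t pauli4 b).

Lemma pauli_sumD X Y : pauli_sum (X + Y) = pauli_sum X + pauli_sum Y.
Proof.
rewrite /pauli_sum -big_split; apply: eq_bigr => a _; rewrite -big_split.
by apply: eq_bigr => b _; rewrite /pcoef /expv mulmxDl mxtraceD scalerDl.
Qed.

Lemma pauli_sumZ c X : pauli_sum (c *: X) = c *: pauli_sum X.
Proof.
rewrite /pauli_sum scaler_sumr; apply: eq_bigr => a _; rewrite scaler_sumr.
by apply: eq_bigr => b _; rewrite /pcoef /expv -scalemxAl mxtraceZ scalerA.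
Qed.

Lemma pauli_sum_tens A B : pauli_sum (A *t B) = 4%:R *: (A *t B).
Proof.
have -> : 4%:R = 2%:R * 2%:R :> C by rewrite -natrM.
rewrite -scalerA -tensmxZl -tensmxZr.
rewrite !pauli4_expansion tensmx_suml; apply: eq_bigr => a _.
rewrite tensmxZl tensmx_sumr scaler_sumr; apply: eq_bigr => b _.
by rewrite tensmxZr scalerA /pcoef /expv tensmx_mul mxtrace_tens mulrC.
Qed.

Lemma pauli_expansion X : 4%:R *: X = pauli_sum X.
Proof.
have pauli_sum_sum (I : Type) (r : seq I) (F : I -> M4) :
    pauli_sum (\sum_(i <- r) F i) = \sum_(i <- r) pauli_sum (F i).
  apply: (big_morph pauli_sum pauli_sumD).
  by have := pauli_sumZ 0 0; rewrite !scale0r.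
rewrite [X]matrix_sum_delta scaler_sumr pauli_sum_sum.
apply: eq_bigr => p _; rewrite scaler_sumr pauli_sum_sum; apply: eq_bigr => q _.
case: (mxtens_indexP p) => p1 p2; case: (mxtens_indexP q) => q1 q2.
by rewrite pauli_sumZ delta_mx_tens pauli_sum_tens !scalerA mulrC.
Qed.

Lemma hs_pauli X Y :
  4%:R * \tr (X *m hadj Y) = \sum_a \sum_b pcoef X a b * Num.conj (pcoef Y a b).
Proof.
rewrite -mxtraceZ scalemxAl pauli_expansion /pauli_sum mulmx_suml raddf_sum /=.
apply: eq_bigr => a _; rewrite mulmx_suml raddf_sum /=; apply: eq_bigr => b _.
by rewrite -scalemxAl mxtraceZ /pcoef /expv -mxtrace_hadj hadj_mul hadj_tens !pauli4_herm.
Qed.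

Lemma hs_bloch Y (z : R) (Z : 'M[R]_3) :
  expv Y id2 id2 = rC z ->
  (forall j, expv Y id2 (pauli j) = 0) -> (forall i, expv Y (pauli i) id2 = 0) ->
  (forall i j, expv Y (pauli i) (pauli j) = rC (Z i j)) ->
  4%:R * \tr (Y *m hadj Y) = rC (z ^+ 2 + frob2 Z).
Proof.
move=> Y00 Y0j Yi0 Yij; rewrite hs_pauli -rCD rC_sum big_ord_recl; congr (_ + _).
  rewrite big_ord_recl big1 ?addr0 => [|j _]; last first.
    by rewrite /pcoef pauli4_0 pauli4_lift Y0j mul0r.
  by rewrite /pcoef pauli4_0 Y00 conjC_rC rCM expr2.
apply: eq_bigr => i _; rewrite big_ord_recl /pcoef pauli4_0 pauli4_lift Yi0 mul0r add0r.
rewrite rC_sum; apply: eq_bigr => j _.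
by rewrite !pauli4_lift Yij conjC_rC rCM expr2.
Qed.

End PauliBasis.

Section LocalOperations.
Variable R : rcfType.
Local Notation C := R[i].
Local Notation M4 := 'M[C]_(2 * 2).
Implicit Types (rho : M4) (k l : 'rV[R]_3) (A B P Q : 'M[C]_2).

Lemma expv_sandwich rho P Q A B :
  \tr ((P *t Q) *m rho *m (P *t Q) *m (A *t B)) = expv rho (P *m A *m P) (Q *m B *m Q).
Proof. by rewrite /expv -!tensmx_mul -!mulmxA mxtrace_mulC -!mulmxA. Qed.

Lemma expv_chi rho k l A B :
  expv (chi rho k l) A B = expv rho (pinch k A) (pinch l B).
Proof.
rewrite {1}/expv /chi /pinch mulmx_suml raddf_sum expv_suml; apply: eq_bigr => a _.
by rewrite mulmx_suml raddf_sum expv_sumr; apply: eq_bigr => b _; apply: expv_sandwich.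
Qed.

Lemma expv_rho_to rho k A B : expv (rho_to rho k) A B = expv rho (pinch k A) B.
Proof.
rewrite {1}/expv /rho_to /pinch mulmx_suml raddf_sum expv_suml; apply: eq_bigr => a _.
by apply: etrans (expv_sandwich _ _ _ _ _) _; rewrite /id2 mul1mx mulmx1.
Qed.

Lemma expv_rho_from rho l A B : expv (rho_from rho l) A B = expv rho A (pinch l B).
Proof.
rewrite {1}/expv /rho_from /pinch mulmx_suml raddf_sum expv_sumr; apply: eq_bigr => b _.
by apply: etrans (expv_sandwich _ _ _ _ _) _; rewrite /id2 mul1mx mulmx1.
Qed.

Lemma expv_local_unitary rho U V A B :
  expv ((U *t V) *m rho *m hadj (U *t V)) A B
  = expv rho (hadj U *m A *m U) (hadj V *m B *m V).
Proof.
by rewrite /expv hadj_tens -!tensmx_mul -!mulmxA mxtrace_mulC !mulmxA.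
Qed.

Lemma unitary_conj_kdots U k :
  unitary2 U -> exists k', U *m kdots k *m hadj U = kdots k' /\ sqnorm k' = sqnorm k.
Proof.
move=> U_unitary; have UU := unitary2_hadj U_unitary.
set H := U *m kdots k *m hadj U.
have [k' Hk'] : exists k', H = kdots k'.
  apply: herm_traceless_kdots.
  - by rewrite /H !hadj_mul hadjK kdots_herm mulmxA.
  - by rewrite /H mxtrace_mulC mulmxA UU mul1mx kdots_trace.
exists k'; split=> //; apply: rC_inj.
have : H *m H = rC (sqnorm k) *: id2.
  rewrite /H -!mulmxA (mulmxA (hadj U)) UU mul1mx !mulmxA -(mulmxA U) kdots_sqr.
  by rewrite -scalemxAr -scalemxAl /id2 mulmx1 U_unitary.
rewrite Hk' kdots_sqr => /(congr1 (fun M : 'M[C]_2 => M 0 0)).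
by rewrite !mxE /= !mulr1.
Qed.

End LocalOperations.

Lemma is_min_on_quarter (R : rcfType) (X : Type) (P : X -> Prop) (f : X -> R[i]) (g : X -> R) m :
  (forall x, P x -> 4%:R * f x = rC (g x)) ->
  (exists2 x, P x & g x = m) -> (forall x, P x -> m <= g x) ->
  is_min_on P f (rC (4%:R^-1 * m)).
Proof.
have f_rC x : P x -> 4%:R * f x = rC (g x) -> f x = rC (4%:R^-1 * g x).
  by move=> _ fx; rewrite -rCM -rCV -rC_natr -fx mulKf // pnatr_eq0.
move=> fg [x Px gx] gm; split=> [|y Py]; first by exists x; rewrite // (f_rC x Px (fg x Px)) gx.
rewrite (f_rC y Py (fg y Py)) rC_le ler_wpM2l ?invr_ge0 ?ler0n //; exact: gm.
Qed.

(* Taking the real part loses nothing when [X] is Hermitian, see [expv_pauli]. *)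
Definition corrmx (R : rcfType) (X : 'M[R[i]]_(2 * 2)) : 'M[R]_3 :=
  \matrix_(i, j) complex.Re (corr X i j).

Section MaximallyMixedMarginals.
Variable R : rcfType.
Local Notation C := R[i].
Implicit Types k l : 'rV[R]_3.

Variable rho : 'M[C]_(2 * 2).
Hypothesis rho_herm : hadj rho = rho.
Hypothesis rho_tr : \tr rho = 1.
Hypothesis marginalA : forall a, expv rho (pauli a) id2 = 0.
Hypothesis marginalB : forall a, expv rho id2 (pauli a) = 0.
Local Notation T := (corrmx rho).

Lemma expv_pauli i j : expv rho (pauli i) (pauli j) = rC (T i j).
Proof. by rewrite mxE; apply: conjC_id_rC; rewrite conj_expv ?pauli_herm. Qed.

Lemma expv_id_id : expv rho id2 id2 = 1.
Proof. by rewrite /expv /id2 tensmx11 mulmx1. Qed.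

Lemma expv_id_kdots l : expv rho id2 (kdots l) = 0.
Proof. by rewrite expv_sumr big1 // => i _; rewrite expvZr marginalB mulr0. Qed.

Lemma expv_kdots_id k : expv rho (kdots k) id2 = 0.
Proof. by rewrite expv_suml big1 // => i _; rewrite expvZl marginalA mulr0. Qed.

Lemma expv_kdots_pauli k j : expv rho (kdots k) (pauli j) = rC ((k *m T) 0 j).
Proof.
rewrite expv_suml [(k *m T) 0 j]mxE rC_sum; apply: eq_bigr => i _.
by rewrite expvZl expv_pauli rCM.
Qed.

Lemma expv_pauli_kdots i l : expv rho (pauli i) (kdots l) = rC ((l *m T^T) 0 i).
Proof.
rewrite expv_sumr [(l *m T^T) 0 i]mxE rC_sum; apply: eq_bigr => j _.
by rewrite expvZr expv_pauli rCM [T^T j i]mxE.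
Qed.

Lemma expv_kdots k l : expv rho (kdots k) (kdots l) = rC (bilin T k l).
Proof.
rewrite {2}/kdots expv_sumr /bilin [X in rC X]mxE rC_sum; apply: eq_bigr => j _.
by rewrite expvZr expv_kdots_pauli [l^T j 0]mxE rCM mulrC.
Qed.

Lemma hs_rho : 4%:R * \tr (rho *m hadj rho) = rC (1 + frob2 T).
Proof.
rewrite (hs_bloch (z := 1) (Z := T)) ?expr1n //; first exact: expv_id_id.
exact: expv_pauli.
Qed.

Lemma hs_chi k l : sqnorm k = 1 -> sqnorm l = 1 ->
  4%:R * HS2 rho (chi rho k l) = rC (frob2 T - bilin T k l ^+ 2).
Proof.
move=> k1 l1.
rewrite /HS2 (hs_bloch (z := 0) (Z := \matrix_(i, j) (T i j - k 0 i * l 0 j * bilin T k l))).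
- by rewrite frob2_residual_bilin k1 l1 expr0n add0r; congr rC; ring.
- by rewrite expvB expv_chi !pinch_id // expv_id_id subrr.
- move=> j; rewrite expvB expv_chi pinch_id // pinch_pauli // expvZr expv_id_kdots.
  by rewrite marginalB mulr0 subr0.
- move=> i; rewrite expvB expv_chi pinch_id // pinch_pauli // expvZl expv_kdots_id.
  by rewrite marginalA mulr0 subr0.
- move=> i j; rewrite expvB expv_chi !pinch_pauli // expvZl expvZr expv_kdots expv_pauli.
  by rewrite [in RHS]mxE !rCM rCN rCD mulrA.
Qed.

Lemma hs_rho_to k : sqnorm k = 1 ->
  4%:R * HS2 rho (rho_to rho k) = rC (frob2 T - sqnorm (k *m T)).
Proof.
move=> k1.
rewrite /HS2 (hs_bloch (z := 0) (Z := \matrix_(i, j) (T i j - k 0 i * (k *m T) 0 j))).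
- by rewrite frob2_residual_row k1 expr0n add0r; congr rC; ring.
- by rewrite expvB expv_rho_to pinch_id // subrr.
- by move=> j; rewrite expvB expv_rho_to pinch_id // subrr.
- move=> i; rewrite expvB expv_rho_to pinch_pauli // expvZl expv_kdots_id.
  by rewrite marginalA mulr0 subr0.
- move=> i j; rewrite expvB expv_rho_to pinch_pauli // expvZl expv_kdots_pauli.
  by rewrite expv_pauli [in RHS]mxE rCM rCN rCD.
Qed.

Lemma hs_rho_from l : sqnorm l = 1 ->
  4%:R * HS2 rho (rho_from rho l) = rC (frob2 T - sqnorm (l *m T^T)).
Proof.
move=> l1.
rewrite /HS2 (hs_bloch (z := 0) (Z := \matrix_(i, j) (T i j - l 0 j * (l *m T^T) 0 i))).
- by rewrite frob2_residual_col l1 expr0n add0r; congr rC; ring.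
- by rewrite expvB expv_rho_from pinch_id // subrr.
- move=> j; rewrite expvB expv_rho_from pinch_pauli // expvZr expv_id_kdots.
  by rewrite marginalB mulr0 subr0.
- by move=> i; rewrite expvB expv_rho_from pinch_id // subrr.
- move=> i j; rewrite expvB expv_rho_from pinch_pauli // expvZr expv_pauli_kdots.
  by rewrite expv_pauli [in RHS]mxE rCM rCN rCD.
Qed.

(* [M] is the largest squared singular value of [T]. *)
Section Minimum.
Variable M : R.
Hypothesis bilin_bound : forall k l, bilin T k l ^+ 2 <= M * sqnorm k * sqnorm l.
Hypothesis bilin_attained :
  exists k l, [/\ sqnorm k = 1, sqnorm l = 1 & bilin T k l ^+ 2 = M].

Lemma bound_ge0 : 0 <= M.
Proof. by have [k [l [_ _ <-]]] := bilin_attained; apply: sqr_ge0. Qed.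

Lemma sqnorm_row_le k : sqnorm k = 1 -> sqnorm (k *m T) <= M.
Proof.
move=> k1; apply: le_of_sqr_le_mul (sqnorm_ge0 _) bound_ge0 _.
by have := bilin_bound k (k *m T); rewrite bilin_mulmx k1 mulr1.
Qed.

Lemma sqnorm_col_le l : sqnorm l = 1 -> sqnorm (l *m T^T) <= M.
Proof.
move=> l1; apply: le_of_sqr_le_mul (sqnorm_ge0 _) bound_ge0 _.
have := bilin_bound (l *m T^T) l; rewrite -bilin_trmx bilin_mulmx l1 mulr1.
by rewrite mulrC.
Qed.

Local Notation v := (rC (4%:R^-1 * (frob2 T - M))).

Lemma G_is_bloch : G_is rho v.
Proof.
apply: (is_min_on_quarter (g := fun kl => frob2 T - bilin T kl.1 kl.2 ^+ 2)).
- by move=> [k l] [/= k1 l1]; apply: hs_chi.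
- by have [k [l [k1 l1 kl]]] := bilin_attained; exists (k, l); rewrite /= ?kl.
- move=> [k l] [/= k1 l1]; rewrite lerD2l lerN2.
  by have := bilin_bound k l; rewrite (k1 : sqnorm k = 1) (l1 : sqnorm l = 1) !mulr1.
Qed.

Lemma Gto_is_bloch : Gto_is rho v.
Proof.
apply: (is_min_on_quarter (g := fun k => frob2 T - sqnorm (k *m T))); first exact: hs_rho_to.
- have [k [l [k1 l1 kl]]] := bilin_attained; exists k => //; congr (_ - _).
  apply/eqP; rewrite eq_le sqnorm_row_le // -kl -[sqnorm _]mulr1 -l1.
  exact: bilin_sqr_le.
- by move=> k k1; rewrite lerD2l lerN2 sqnorm_row_le.
Qed.

Lemma Gfrom_is_bloch : Gfrom_is rho v.
Proof.
apply: (is_min_on_quarter (g := fun l => frob2 T - sqnorm (l *m T^T))); first exact: hs_rho_from.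
- have [k [l [k1 l1 kl]]] := bilin_attained; exists l => //; congr (_ - _).
  apply/eqP; rewrite eq_le sqnorm_col_le // -kl -bilin_trmx -[sqnorm _]mulr1 -k1.
  exact: bilin_sqr_le.
- by move=> l l1; rewrite lerD2l lerN2 sqnorm_col_le.
Qed.

End Minimum.

End MaximallyMixedMarginals.

Section LocalUnitaryFrame.
Variable R : rcfType.
Local Notation C := R[i].
Implicit Types k l : 'rV[R]_3.

Lemma kdots_delta j : kdots (delta_mx 0 j) = pauli j :> 'M[C]_2.
Proof.
rewrite /kdots (bigD1 j) //= big1 => [|i ij]; first by rewrite mxE !eqxx rC1 scale1r addr0.
by rewrite mxE (negbTE ij) andbF rC0 scale0r.
Qed.

Lemma sqnorm_delta j : sqnorm (delta_mx 0 j : 'rV[R]_3) = 1.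
Proof.
rewrite /sqnorm (bigD1 j) //= big1 => [|i ij]; first by rewrite mxE !eqxx expr1n addr0.
by rewrite mxE (negbTE ij) andbF expr0n.
Qed.

Lemma unitary_rotate_kdots (W : 'M[C]_2) k : unitary2 W ->
  exists k', hadj W *m kdots k *m W = kdots k' /\ sqnorm k' = sqnorm k.
Proof. by move=> /unitary2_hadjK /(unitary_conj_kdots k); rewrite hadjK. Qed.

Lemma unitary_conj_id2 (W : 'M[C]_2) : unitary2 W -> hadj W *m id2 *m W = id2.
Proof. by move=> /unitary2_hadj WW; rewrite /id2 mulmx1 WW. Qed.

Variable rho : 'M[C]_(2 * 2).
Variables U V : 'M[C]_2.
Variable t : 'I_3 -> R.
Hypothesis rho_herm : hadj rho = rho.
Hypothesis rho_tr : \tr rho = 1.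
Hypothesis marginalA : forall a, expv rho (pauli a) id2 = 0.
Hypothesis marginalB : forall a, expv rho id2 (pauli a) = 0.
Hypothesis U_unitary : unitary2 U.
Hypothesis V_unitary : unitary2 V.
Let rho' := (U *t V) *m rho *m hadj (U *t V).
Hypothesis corr_diag : forall a b, corr rho' a b = rC (if a == b then t a else 0).
Local Notation T := (corrmx rho).
Local Notation D := (diag_mx (\row_i t i)).

Lemma unitary_tens_hadj : hadj (U *t V) *m (U *t V) = 1%:M.
Proof. by rewrite hadj_tens tensmx_mul !unitary2_hadj // tensmx11. Qed.

Lemma rho'_herm : hadj rho' = rho'.
Proof. by rewrite /rho' !hadj_mul hadjK rho_herm mulmxA. Qed.

Lemma rho'_tr : \tr rho' = 1.
Proof. by rewrite /rho' mxtrace_mulC mulmxA unitary_tens_hadj mul1mx rho_tr. Qed.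

Lemma marginalA' a : expv rho' (pauli a) id2 = 0.
Proof.
have [k [Uk _]] := unitary_rotate_kdots (delta_mx 0 a) U_unitary.
rewrite kdots_delta in Uk.
by rewrite /rho' expv_local_unitary Uk unitary_conj_id2 // (expv_kdots_id marginalA).
Qed.

Lemma marginalB' a : expv rho' id2 (pauli a) = 0.
Proof.
have [l [Vl _]] := unitary_rotate_kdots (delta_mx 0 a) V_unitary.
rewrite kdots_delta in Vl.
by rewrite /rho' expv_local_unitary Vl unitary_conj_id2 // (expv_id_kdots marginalB).
Qed.

Lemma corrmx_local_frame : corrmx rho' = D.
Proof.
by apply/matrixP => a b; rewrite !mxE corr_diag; case: eqP; rewrite ?mulr1n ?mulr0n.
Qed.

Lemma mxtrace_local_unitary : \tr (rho' *m hadj rho') = \tr (rho *m hadj rho).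
Proof.
rewrite /rho' !hadj_mul hadjK !mulmxA -(mulmxA _ (hadj (U *t V)) (U *t V)).
by rewrite unitary_tens_hadj mulmx1 mxtrace_mulC !mulmxA unitary_tens_hadj mul1mx.
Qed.

Lemma frob2_corrmx : frob2 T = sqnorm (\row_i t i).
Proof.
apply: (@addrI _ 1); apply: rC_inj; rewrite -(hs_rho rho_herm rho_tr marginalA marginalB).
have := hs_rho rho'_herm rho'_tr marginalA' marginalB'.
by rewrite corrmx_local_frame frob2_diag => <-; rewrite mxtrace_local_unitary.
Qed.

Lemma bilin_corrmx_local k l : exists x y,
  [/\ sqnorm x = sqnorm k, sqnorm y = sqnorm l & bilin T k l = bilin D x y].
Proof.
have [x [Ux xk]] := unitary_conj_kdots k U_unitary.
have [y [Vy yl]] := unitary_conj_kdots l V_unitary.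
exists x, y; split => //; apply: rC_inj.
rewrite -(expv_kdots rho_herm) -corrmx_local_frame.
rewrite -(expv_kdots rho'_herm) -Ux -Vy /rho' expv_local_unitary.
by rewrite !mulmxA !unitary2_hadj // !mul1mx -!mulmxA !unitary2_hadj // !mulmx1.
Qed.

Lemma bilin_corrmx_attains j : exists k l,
  [/\ sqnorm k = 1, sqnorm l = 1 & bilin T k l = t j].
Proof.
have [k [Uk k1]] := unitary_rotate_kdots (delta_mx 0 j) U_unitary.
have [l [Vl l1]] := unitary_rotate_kdots (delta_mx 0 j) V_unitary.
exists k, l; rewrite k1 l1 sqnorm_delta; split => //; apply: rC_inj.
rewrite -(expv_kdots rho_herm) -Uk -Vl !kdots_delta -expv_local_unitary.
by rewrite -/rho' [expv _ _ _]corr_diag eqxx.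
Qed.

End LocalUnitaryFrame.

Theorem mainTheorem2 (R : rcfType) (rho : 'M[R[i]]_(2 * 2))
  (U V : 'M[R[i]]_2) (t : 'I_3 -> R) :
  density rho ->
  (forall a : 'I_3, \tr (rho *m (pauli a *t id2)) = 0) ->
  (forall a : 'I_3, \tr (rho *m (id2 *t pauli a)) = 0) ->
  unitary2 U -> unitary2 V ->
  (forall a b : 'I_3,
     corr ((U *t V) *m rho *m hadj (U *t V)) a b
       = rC (if a == b then t a else 0)) ->
  let v := rC ((4%:R)^-1 *
                 (t 0 ^+ 2 + t 1 ^+ 2 + t 2 ^+ 2
                  - Num.max (Num.max (t 0 ^+ 2) (t 1 ^+ 2)) (t 2 ^+ 2))) in
  G_is rho v /\ Gto_is rho v /\ Gfrom_is rho v.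
Proof.
move=> [rho_herm _ rho_tr] marginalA marginalB U_unitary V_unitary corr_diag v.
rewrite {}/v; set M := Num.max _ _.
have bound k l : bilin (corrmx rho) k l ^+ 2 <= M * sqnorm k * sqnorm l.
  have [x [y [<- <- ->]]] := bilin_corrmx_local rho_herm U_unitary V_unitary corr_diag k l.
  by apply: bilin_diag_sqr_le => i; rewrite mxE /M; case: (ord3P i) => ->;
    rewrite !le_max lexx ?orbT.
have attained : exists k l,
    [/\ sqnorm k = 1, sqnorm l = 1 & bilin (corrmx rho) k l ^+ 2 = M].
  have [j <-] : exists j, t j ^+ 2 = M by rewrite /M !maxEle; repeat case: ifP => _; eexists.
  have [k [l [k1 l1 <-]]] := bilin_corrmx_attains rho_herm U_unitary V_unitary corr_diag j.
  by exists k, l.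
have frob2T : frob2 (corrmx rho) = t 0 ^+ 2 + t 1 ^+ 2 + t 2 ^+ 2.
  by rewrite (frob2_corrmx rho_herm rho_tr marginalA marginalB U_unitary V_unitary corr_diag)
    /sqnorm sum_ord3 !mxE.
rewrite -frob2T; split; last split.
- exact: G_is_bloch rho_herm rho_tr marginalA marginalB _ bound attained.
- exact: Gto_is_bloch rho_herm marginalA _ bound attained.
- exact: Gfrom_is_bloch rho_herm marginalB _ bound attained.
Qed.
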